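(* Let $S$ be a functional PTS specification. Suppose $\mathrm{WF}_{\lambda S}(\Gamma)$ and either $\Gamma\vdash_{\lambda S}A:s$ or $A=s$ for some $s\in\mathcal S$. If $\Gamma\vdash_{\lambda S^*}M:A$, then there is $M'$ with $M\longrightarrow_\beta^*M'$ and $\Gamma\vdash_{\lambda S}M':A$.
   Context: PTS: specification $S=(\mathcal S,\mathcal A,\mathcal R)$ (sorts, axioms $(s_1:s_2)$, rules $(s_1,s_2,s_3)$), functional meaning $\mathcal A,\mathcal R$ are functional relations; $\lambda S$ has terms $s\mid x\mid M\,N\mid\lambda x:A.M\mid\Pi x:A.B$ and the standard PTS typing rules (axiom rule from $\mathcal A$, product rule from $\mathcal R$, abstraction, application, conversion modulo $\equiv_\beta$); $\mathrm{WF}_{\lambda S}(\Gamma)$ means $\Gamma$ is well formed. A top-sort is a sort $s$ with no $(s:s')\in\mathcal A$. The minimal completion $S^*=(\mathcal S^*,\mathcal A^*,\mathcal R^* )$: $\mathcal S^*=\mathcal S\cup\{\tau\}$ with $\tau\notin\mathcal S$; $\mathcal A^*=\mathcal A\cup\{(s_1:\tau)\mid s_1\in\mathcal S$ a top-sort of $S\}$; $\mathcal R^*=\mathcal R\cup\{(s_1,s_2,\tau)\mid s_1,s_2\in\mathcal S^*$, there is no $s_3$ with $(s_1,s_2,s_3)\in\mathcal R\}$. $\lambda S^*$ is the PTS with this specification. *)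

From Stdlib Require Import List Arith Relations.
Import ListNotations.
Set Implicit Arguments.

Inductive term (srt : Type) : Type :=
| Srt : srt -> term srt
| Var : nat -> term srt
| App : term srt -> term srt -> term srt
| Lam : term srt -> term srt -> term srt
| Pi  : term srt -> term srt -> term srt.
Arguments Srt {srt} _.
Arguments Var {srt} _.
Arguments App {srt} _ _.
Arguments Lam {srt} _ _.
Arguments Pi {srt} _ _.

Fixpoint lift_rec {srt} (n : nat) (t : term srt) (k : nat) : term srt :=
  match t with
  | Srt s => Srt s
  | Var i => if k <=? i then Var (i + n) else Var i
  | App u v => App (lift_rec n u k) (lift_rec n v k)
  | Lam a u => Lam (lift_rec n a k) (lift_rec n u (S k))
  | Pi a b => Pi (lift_rec n a k) (lift_rec n b (S k))
  end.
Definition lift {srt} (n : nat) (t : term srt) : term srt := lift_rec n t 0.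

Fixpoint subst_rec {srt} (N t : term srt) (k : nat) : term srt :=
  match t with
  | Srt s => Srt s
  | Var i =>
      if i <? k then Var i
      else if i =? k then lift k N
      else Var (pred i)
  | App u v => App (subst_rec N u k) (subst_rec N v k)
  | Lam a u => Lam (subst_rec N a k) (subst_rec N u (S k))
  | Pi a b => Pi (subst_rec N a k) (subst_rec N b (S k))
  end.
Definition subst {srt} (N t : term srt) : term srt := subst_rec N t 0.

Inductive beta1 {srt} : term srt -> term srt -> Prop :=
| beta_redex : forall A M N, beta1 (App (Lam A M) N) (subst N M)
| beta_app_l : forall M M' N, beta1 M M' -> beta1 (App M N) (App M' N)
| beta_app_r : forall M N N', beta1 N N' -> beta1 (App M N) (App M N')
| beta_lam_l : forall A A' M, beta1 A A' -> beta1 (Lam A M) (Lam A' M)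
| beta_lam_r : forall A M M', beta1 M M' -> beta1 (Lam A M) (Lam A M')
| beta_pi_l  : forall A A' B, beta1 A A' -> beta1 (Pi A B) (Pi A' B)
| beta_pi_r  : forall A B B', beta1 B B' -> beta1 (Pi A B) (Pi A B').

Definition beta_star {srt} : relation (term srt) := clos_refl_trans _ beta1.
Definition beta_conv {srt} : relation (term srt) := clos_refl_sym_trans _ beta1.

(* A PTS specification: sorts = all inhabitants of srt; axioms; rules. *)
Record spec (srt : Type) : Type := Spec {
  ax : srt -> srt -> Prop;
  rl : srt -> srt -> srt -> Prop
}.
Arguments ax {srt} _ _ _.
Arguments rl {srt} _ _ _ _.

Definition functional {srt} (S : spec srt) : Prop :=
  (forall s s1 s2, ax S s s1 -> ax S s s2 -> s1 = s2) /\
  (forall s1 s2 s3 s3', rl S s1 s2 s3 -> rl S s1 s2 s3' -> s3 = s3').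

Definition top_sort {srt} (S : spec srt) (s : srt) : Prop :=
  ~ exists s', ax S s s'.

(* The minimal completion S^*: sorts option srt, with None playing tau. *)
Definition star_ax {srt} (S : spec srt) (x y : option srt) : Prop :=
  match x, y with
  | Some s1, Some s2 => ax S s1 s2
  | Some s1, None => top_sort S s1
  | None, _ => False
  end.

Definition star_rl {srt} (S : spec srt) (x y z : option srt) : Prop :=
  match z with
  | Some s3 => exists s1 s2, x = Some s1 /\ y = Some s2 /\ rl S s1 s2 s3
  | None => ~ exists s1 s2 s3, x = Some s1 /\ y = Some s2 /\ rl S s1 s2 s3
  end.

Definition completion {srt} (S : spec srt) : spec (option srt) :=
  Spec (star_ax S) (star_rl S).

Fixpoint emb {srt} (t : term srt) : term (option srt) :=
  match t with
  | Srt s => Srt (Some s)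
  | Var i => Var i
  | App u v => App (emb u) (emb v)
  | Lam a u => Lam (emb a) (emb u)
  | Pi a b => Pi (emb a) (emb b)
  end.

(* Contexts: lists, head = most recent declaration (de Bruijn index 0). *)
Definition context srt := list (term srt).

Inductive wf {srt} (P : spec srt) : context srt -> Prop :=
| wf_nil : wf P []
| wf_cons : forall G A s, typ P G A (Srt s) -> wf P (A :: G)
with typ {srt} (P : spec srt) : context srt -> term srt -> term srt -> Prop :=
| typ_ax : forall G s1 s2, wf P G -> ax P s1 s2 -> typ P G (Srt s1) (Srt s2)
| typ_var : forall G n A, wf P G -> nth_error G n = Some A ->
    typ P G (Var n) (lift (S n) A)
| typ_pi : forall G A B s1 s2 s3,
    typ P G A (Srt s1) -> typ P (A :: G) B (Srt s2) -> rl P s1 s2 s3 ->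
    typ P G (Pi A B) (Srt s3)
| typ_lam : forall G A B M s,
    typ P (A :: G) M B -> typ P G (Pi A B) (Srt s) ->
    typ P G (Lam A M) (Pi A B)
| typ_app : forall G M N A B,
    typ P G M (Pi A B) -> typ P G N A -> typ P G (App M N) (subst N B)
| typ_conv : forall G M A B s,
    typ P G M A -> typ P G B (Srt s) -> beta_conv A B -> typ P G M B.

(* The completion S* only adds the sort tau, which has no type, and lets
   Pi-types that S forbids live in tau.  A term of S* whose type comes from S
   can therefore use tau-level abstractions only as intermediate steps, and
   beta-reduction removes them.  This is proved with a Kripke logical
   relation indexed by the skeleton of a type: a type whose sort is a sort of
   S is interpreted by "reduces to a term of S with a convertible type", and a
   Pi-type of sort tau by the function space between the interpretations of
   its domain and codomain, closed under context extension.  The fundamental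
   lemma, applied to the identity substitution, gives the theorem; Church-
   Rosser, subject reduction and uniqueness of types (this is where
   functionality of S enters) make the skeleton of a type well defined. *)
From Stdlib Require Import List Arith Lia Relations.
Import ListNotations.
Set Implicit Arguments.

Definition upren (xi : nat -> nat) (i : nat) : nat :=
  match i with 0 => 0 | S j => S (xi j) end.

Fixpoint ren {srt} (xi : nat -> nat) (t : term srt) : term srt :=
  match t with
  | Srt s => Srt s
  | Var i => Var (xi i)
  | App u v => App (ren xi u) (ren xi v)
  | Lam a u => Lam (ren xi a) (ren (upren xi) u)
  | Pi a b => Pi (ren xi a) (ren (upren xi) b)
  end.

Definition up {srt} (sg : nat -> term srt) (i : nat) : term srt :=
  match i with 0 => Var 0 | S j => ren S (sg j) end.

Fixpoint inst {srt} (sg : nat -> term srt) (t : term srt) : term srt :=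
  match t with
  | Srt s => Srt s
  | Var i => sg i
  | App u v => App (inst sg u) (inst sg v)
  | Lam a u => Lam (inst sg a) (inst (up sg) u)
  | Pi a b => Pi (inst sg a) (inst (up sg) b)
  end.

Definition scons {srt} (N : term srt) (sg : nat -> term srt) (i : nat) : term srt :=
  match i with 0 => N | S j => sg j end.

Definition lift_index (n k i : nat) : nat := if k <=? i then i + n else i.

Definition subst_at {srt} (N : term srt) (k i : nat) : term srt :=
  if i <? k then Var i else if i =? k then lift k N else Var (pred i).

Section Substitution.
Context {srt : Type}.
Notation tm := (term srt).

Lemma ren_ext (t : tm) xi zeta : (forall i, xi i = zeta i) -> ren xi t = ren zeta t.
Proof.
  revert xi zeta; induction t; intros xi zeta H; simpl; f_equal; auto;
    (apply IHt2 || apply IHt1); intros [|i]; simpl; auto.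
Qed.

Lemma inst_ext (t : tm) sg tau : (forall i, sg i = tau i) -> inst sg t = inst tau t.
Proof.
  revert sg tau; induction t; intros sg tau H; simpl; f_equal; auto;
    apply IHt2; intros [|i]; simpl; rewrite ?H; auto.
Qed.

Lemma ren_ren (t : tm) xi zeta : ren xi (ren zeta t) = ren (fun i => xi (zeta i)) t.
Proof.
  revert xi zeta; induction t; intros xi zeta; simpl; f_equal; auto;
    rewrite IHt2; apply ren_ext; intros [|i]; simpl; auto.
Qed.

Lemma inst_ren (t : tm) sg xi : inst sg (ren xi t) = inst (fun i => sg (xi i)) t.
Proof.
  revert sg xi; induction t; intros sg xi; simpl; f_equal; auto;
    rewrite IHt2; apply inst_ext; intros [|i]; simpl; auto.
Qed.

Lemma ren_inst (t : tm) sg xi : ren xi (inst sg t) = inst (fun i => ren xi (sg i)) t.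
Proof.
  revert sg xi; induction t; intros sg xi; simpl; f_equal; auto;
    rewrite IHt2; apply inst_ext; intros [|i]; simpl; auto;
    rewrite !ren_ren; apply ren_ext; reflexivity.
Qed.

Lemma inst_inst (t : tm) sg tau : inst sg (inst tau t) = inst (fun i => inst sg (tau i)) t.
Proof.
  revert sg tau; induction t; intros sg tau; simpl; f_equal; auto;
    rewrite IHt2; apply inst_ext; intros [|i]; simpl; auto;
    rewrite inst_ren, ren_inst; apply inst_ext; reflexivity.
Qed.

Lemma ren_as_inst (t : tm) xi : ren xi t = inst (fun i => Var (xi i)) t.
Proof.
  revert xi; induction t; intros xi; simpl; f_equal; auto;
    rewrite IHt2; apply inst_ext; intros [|i]; simpl; auto.
Qed.

Lemma inst_var (t : tm) : inst Var t = t.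
Proof.
  induction t; simpl; f_equal; auto;
    rewrite <- IHt2 at 2; apply inst_ext; intros [|i]; simpl; auto.
Qed.

Lemma lift_rec_as_ren (t : tm) n k : lift_rec n t k = ren (lift_index n k) t.
Proof.
  revert k; induction t; intros k; simpl; f_equal; auto.
  - unfold lift_index; destruct (k <=? n0); auto.
  - rewrite IHt2; apply ren_ext; intros [|i]; unfold lift_index; simpl; auto;
      destruct (k <=? i); auto.
  - rewrite IHt2; apply ren_ext; intros [|i]; unfold lift_index; simpl; auto;
      destruct (k <=? i); auto.
Qed.

Lemma lift_as_inst (t : tm) n : lift n t = inst (fun i => Var (n + i)) t.
Proof.
  unfold lift; rewrite lift_rec_as_ren, ren_as_inst; apply inst_ext; intros i.
  unfold lift_index; simpl; f_equal; lia.
Qed.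

Lemma lift1_as_ren (t : tm) : lift 1 t = ren S t.
Proof. rewrite lift_as_inst, ren_as_inst; reflexivity. Qed.

Lemma lift_rec0 (t : tm) k : lift_rec 0 t k = t.
Proof.
  rewrite lift_rec_as_ren, ren_as_inst.
  rewrite <- (inst_var t) at 2; apply inst_ext; intros i.
  unfold lift_index; destruct (k <=? i); f_equal; lia.
Qed.

Lemma lift_lift (t : tm) n m : lift n (lift m t) = lift (n + m) t.
Proof.
  unfold lift; rewrite !lift_rec_as_ren, ren_ren; apply ren_ext; intros i.
  unfold lift_index; simpl; lia.
Qed.

Lemma lift_S (t : tm) n : lift (S n) t = lift 1 (lift n t).
Proof. rewrite lift_lift; reflexivity. Qed.

Lemma lift_rec1_lift_rec1 (t : tm) n m :
  lift_rec n (lift_rec m t 1) 1 = lift_rec (n + m) t 1.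
Proof.
  rewrite !lift_rec_as_ren, ren_ren; apply ren_ext; intros [|i];
    unfold lift_index; simpl; lia.
Qed.

Lemma subst_rec_as_inst (t N : tm) k : subst_rec N t k = inst (subst_at N k) t.
Proof.
  revert k; induction t; intros k; simpl; f_equal; auto.
  all: rewrite IHt2; apply inst_ext; intros [|i]; unfold subst_at; simpl; auto.
  all: destruct (Nat.ltb_spec i k), (Nat.ltb_spec (S i) (S k)); try lia; auto;
       destruct (Nat.eqb_spec i k), (Nat.eqb_spec (S i) (S k)); try lia; simpl;
       [subst; rewrite !lift_as_inst, ren_as_inst, inst_inst; apply inst_ext; reflexivity
       | f_equal; lia].
Qed.

Lemma subst_as_inst (t N : tm) : subst N t = inst (scons N Var) t.
Proof.
  unfold subst; rewrite subst_rec_as_inst; apply inst_ext; intros [|i];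
    unfold subst_at; simpl; auto; unfold lift; apply lift_rec0.
Qed.

Lemma subst_inst_up (t N : tm) sg : subst N (inst (up sg) t) = inst (scons N sg) t.
Proof.
  rewrite subst_as_inst, inst_inst; apply inst_ext; intros [|i]; simpl; auto.
  rewrite inst_ren; rewrite <- (inst_var (sg i)) at 2; apply inst_ext; reflexivity.
Qed.

Lemma inst_subst (t N : tm) sg : inst sg (subst N t) = subst (inst sg N) (inst (up sg) t).
Proof.
  rewrite subst_inst_up, subst_as_inst, inst_inst; apply inst_ext; intros [|i]; auto.
Qed.

Lemma ren_subst (t N : tm) xi : ren xi (subst N t) = subst (ren xi N) (ren (upren xi) t).
Proof.
  rewrite !ren_as_inst, inst_subst; f_equal; apply inst_ext; intros [|i]; auto.
Qed.

Lemma subst_lift1 (t N : tm) : subst N (lift 1 t) = t.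
Proof.
  rewrite subst_as_inst, lift_as_inst, inst_inst.
  rewrite <- (inst_var t) at 2; apply inst_ext; reflexivity.
Qed.

Lemma inst_up_lift1 (t : tm) sg : inst (up sg) (lift 1 t) = lift 1 (inst sg t).
Proof.
  rewrite lift1_as_ren, lift1_as_ren, inst_ren, ren_inst; reflexivity.
Qed.

Lemma inst_lift (t : tm) sg n : inst sg (lift n t) = inst (fun i => sg (n + i)) t.
Proof. rewrite lift_as_inst, inst_inst; reflexivity. Qed.

Lemma lift_inst (t : tm) sg n : lift n (inst sg t) = inst (fun i => lift n (sg i)) t.
Proof.
  rewrite lift_as_inst, inst_inst; apply inst_ext; intros i; rewrite lift_as_inst; reflexivity.
Qed.

Lemma lift_rec1_inst_up (t : tm) sg n :
  lift_rec n (inst (up sg) t) 1 = inst (up (fun i => lift n (sg i))) t.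
Proof.
  rewrite lift_rec_as_ren, ren_inst; apply inst_ext; intros [|i]; simpl; auto.
  rewrite !lift_as_inst, !ren_as_inst, !inst_inst; apply inst_ext; intros j.
  unfold lift_index; simpl; f_equal; lia.
Qed.

End Substitution.

Section Beta.
Context {srt : Type}.
Notation tm := (term srt).

Lemma beta_star_refl (M : tm) : beta_star M M.
Proof. apply rt_refl. Qed.

Lemma beta_star_trans (M N P : tm) : beta_star M N -> beta_star N P -> beta_star M P.
Proof. apply rt_trans. Qed.

Lemma beta_star_step (M N : tm) : beta1 M N -> beta_star M N.
Proof. apply rt_step. Qed.

Lemma beta_conv_refl (M : tm) : beta_conv M M.
Proof. apply rst_refl. Qed.

Lemma beta_conv_sym (M N : tm) : beta_conv M N -> beta_conv N M.
Proof. apply rst_sym. Qed.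

Lemma beta_conv_trans (M N P : tm) : beta_conv M N -> beta_conv N P -> beta_conv M P.
Proof. apply rst_trans. Qed.

Lemma beta_star_conv (M N : tm) : beta_star M N -> beta_conv M N.
Proof. induction 1; [apply rst_step | apply rst_refl | eapply rst_trans]; eauto. Qed.

Lemma beta_star_map {srt'} (f : tm -> term srt') :
  (forall M M', beta1 M M' -> beta1 (f M) (f M')) ->
  forall M M', beta_star M M' -> beta_star (f M) (f M').
Proof.
  intros Hf M M' H; induction H; [apply rt_step | apply rt_refl | eapply rt_trans]; eauto.
Qed.

Lemma beta_conv_map {srt'} (f : tm -> term srt') :
  (forall M M', beta1 M M' -> beta1 (f M) (f M')) ->
  forall M M', beta_conv M M' -> beta_conv (f M) (f M').
Proof.
  intros Hf M M' H; induction H;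
    [apply rst_step | apply rst_refl | apply rst_sym | eapply rst_trans]; eauto.
Qed.

Lemma beta_star_app (M M' N N' : tm) :
  beta_star M M' -> beta_star N N' -> beta_star (App M N) (App M' N').
Proof.
  intros HM HN; apply beta_star_trans with (App M' N).
  - apply (beta_star_map (fun x => App x N)); auto using beta_app_l.
  - apply (beta_star_map (App M')); auto using beta_app_r.
Qed.

Lemma beta_star_lam (A A' M M' : tm) :
  beta_star A A' -> beta_star M M' -> beta_star (Lam A M) (Lam A' M').
Proof.
  intros HA HM; apply beta_star_trans with (Lam A' M).
  - apply (beta_star_map (fun x => Lam x M)); auto using beta_lam_l.
  - apply (beta_star_map (Lam A')); auto using beta_lam_r.
Qed.

Lemma beta_star_pi (A A' B B' : tm) :
  beta_star A A' -> beta_star B B' -> beta_star (Pi A B) (Pi A' B').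
Proof.
  intros HA HB; apply beta_star_trans with (Pi A' B).
  - apply (beta_star_map (fun x => Pi x B)); auto using beta_pi_l.
  - apply (beta_star_map (Pi A')); auto using beta_pi_r.
Qed.

Lemma beta_conv_pi (A A' B B' : tm) :
  beta_conv A A' -> beta_conv B B' -> beta_conv (Pi A B) (Pi A' B').
Proof.
  intros HA HB; apply beta_conv_trans with (Pi A' B).
  - apply (beta_conv_map (fun x => Pi x B)); auto using beta_pi_l.
  - apply (beta_conv_map (Pi A')); auto using beta_pi_r.
Qed.

Lemma beta1_ren (M M' : tm) xi : beta1 M M' -> beta1 (ren xi M) (ren xi M').
Proof.
  intros H; revert xi; induction H; intros xi; simpl; try (constructor; auto).
  rewrite ren_subst; constructor.
Qed.

Lemma beta1_inst (M M' : tm) sg : beta1 M M' -> beta1 (inst sg M) (inst sg M').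
Proof.
  intros H; revert sg; induction H; intros sg; simpl; try (constructor; auto).
  rewrite inst_subst; constructor.
Qed.

Lemma beta_star_inst (M M' : tm) sg : beta_star M M' -> beta_star (inst sg M) (inst sg M').
Proof. apply beta_star_map; auto using beta1_inst. Qed.

Lemma beta_conv_inst (M M' : tm) sg : beta_conv M M' -> beta_conv (inst sg M) (inst sg M').
Proof. apply beta_conv_map; auto using beta1_inst. Qed.

Lemma beta_star_lift_rec (M M' : tm) n k :
  beta_star M M' -> beta_star (lift_rec n M k) (lift_rec n M' k).
Proof. rewrite !lift_rec_as_ren; apply beta_star_map; auto using beta1_ren. Qed.

Lemma beta_conv_lift_rec (M M' : tm) n k :
  beta_conv M M' -> beta_conv (lift_rec n M k) (lift_rec n M' k).
Proof. rewrite !lift_rec_as_ren; apply beta_conv_map; auto using beta1_ren. Qed.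

Lemma beta_star_inst_pointwise (M : tm) sg tau :
  (forall i, beta_star (sg i) (tau i)) -> beta_star (inst sg M) (inst tau M).
Proof.
  assert (Hup : forall sg tau : nat -> tm, (forall i, beta_star (sg i) (tau i)) ->
                forall i, beta_star (up sg i) (up tau i)).
  { intros sg' tau' H [|i]; simpl; auto using beta_star_refl.
    apply beta_star_map; auto using beta1_ren. }
  revert sg tau; induction M; intros sg tau H; simpl;
    auto using beta_star_refl, beta_star_app, beta_star_lam, beta_star_pi.
Qed.

Lemma beta_star_subst (M M' N N' : tm) :
  beta_star M M' -> beta_star N N' -> beta_star (subst N M) (subst N' M').
Proof.
  intros HM HN; rewrite !subst_as_inst.
  apply beta_star_trans with (inst (scons N' Var) M).
  - apply beta_star_inst_pointwise; intros [|i]; simpl; auto using beta_star_refl.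
  - apply beta_star_inst; auto.
Qed.

Lemma beta_conv_subst (M M' N : tm) : beta_conv M M' -> beta_conv (subst N M) (subst N M').
Proof. rewrite !subst_as_inst; apply beta_conv_inst. Qed.

Inductive par : tm -> tm -> Prop :=
| par_srt s : par (Srt s) (Srt s)
| par_var n : par (Var n) (Var n)
| par_app M M' N N' : par M M' -> par N N' -> par (App M N) (App M' N')
| par_lam A A' M M' : par A A' -> par M M' -> par (Lam A M) (Lam A' M')
| par_pi A A' B B' : par A A' -> par B B' -> par (Pi A B) (Pi A' B')
| par_beta A M M' N N' : par M M' -> par N N' -> par (App (Lam A M) N) (subst N' M').

Lemma par_refl (M : tm) : par M M.
Proof. induction M; constructor; auto. Qed.

Lemma beta1_par (M M' : tm) : beta1 M M' -> par M M'.
Proof. induction 1; constructor; auto using par_refl. Qed.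

Lemma par_beta_star (M M' : tm) : par M M' -> beta_star M M'.
Proof.
  induction 1; auto using beta_star_refl, beta_star_app, beta_star_lam, beta_star_pi.
  apply beta_star_trans with (App (Lam A M') N').
  - auto using beta_star_app, beta_star_lam, beta_star_refl.
  - apply beta_star_step; constructor.
Qed.

Lemma par_ren (M M' : tm) xi : par M M' -> par (ren xi M) (ren xi M').
Proof.
  intros H; revert xi; induction H; intros xi; simpl; try (constructor; auto; fail).
  rewrite ren_subst; constructor; auto.
Qed.

Lemma par_inst (M M' : tm) sg tau :
  par M M' -> (forall i, par (sg i) (tau i)) -> par (inst sg M) (inst tau M').
Proof.
  assert (Hup : forall sg tau : nat -> tm, (forall i, par (sg i) (tau i)) ->
                forall i, par (up sg i) (up tau i)).
  { intros sg' tau' H [|i]; simpl; [constructor | apply par_ren; auto]. }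
  intros H; revert sg tau; induction H; intros sg tau Hs; simpl;
    try (constructor; auto; fail); auto.
  rewrite inst_subst; constructor; auto.
Qed.

Lemma par_subst (M M' N N' : tm) : par M M' -> par N N' -> par (subst N M) (subst N' M').
Proof.
  intros; rewrite !subst_as_inst; apply par_inst; auto.
  intros [|i]; simpl; auto using par_refl.
Qed.

(* Takahashi's complete development, giving the triangle property [par_develop]. *)
Fixpoint develop (t : tm) : tm :=
  match t with
  | App (Lam _ b) v => subst (develop v) (develop b)
  | App u v => App (develop u) (develop v)
  | Lam a u => Lam (develop a) (develop u)
  | Pi a b => Pi (develop a) (develop b)
  | x => x
  end.

Lemma par_develop (M M' : tm) : par M M' -> par M' (develop M).
Proof.
  induction 1; simpl; try (constructor; auto).
  - destruct M; try (constructor; auto).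
    inversion H; subst; simpl in IHpar1; inversion IHpar1; subst; constructor; auto.
  - apply par_subst; auto.
Qed.

Lemma par_strip (M M1 M2 : tm) :
  beta_star M M2 -> par M M1 -> exists P, beta_star M1 P /\ par M2 P.
Proof.
  intros H; revert M1; apply clos_rt_rt1n in H; induction H; intros M1 HM1.
  - exists M1; split; auto using beta_star_refl.
  - destruct (IHclos_refl_trans_1n _ (par_develop (beta1_par H))) as [P [HP1 HP2]].
    exists P; split; auto.
    eapply beta_star_trans; [apply par_beta_star, par_develop | ]; eauto.
Qed.

Lemma confluence (M M1 M2 : tm) :
  beta_star M M1 -> beta_star M M2 -> exists P, beta_star M1 P /\ beta_star M2 P.
Proof.
  intros H; revert M2; apply clos_rt_rt1n in H; induction H; intros M2 H2.
  - exists M2; split; auto using beta_star_refl.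
  - destruct (par_strip H2 (beta1_par H)) as [P [HP1 HP2]].
    destruct (IHclos_refl_trans_1n _ HP1) as [Q [HQ1 HQ2]].
    exists Q; split; auto. eapply beta_star_trans; [apply par_beta_star |]; eauto.
Qed.

Lemma church_rosser (M N : tm) : beta_conv M N -> exists P, beta_star M P /\ beta_star N P.
Proof.
  induction 1 as [x y H | x | x y _ [P [? ?]] | x y z _ [P [? ?]] _ [Q [? ?]]].
  - exists y; split; auto using beta_star_refl, beta_star_step.
  - exists x; split; auto using beta_star_refl.
  - exists P; auto.
  - destruct (confluence H0 H1) as [R [? ?]].
    exists R; split; eapply beta_star_trans; eauto.
Qed.

Lemma beta_star_srt_inv s (T : tm) : beta_star (Srt s) T -> T = Srt s.
Proof.
  intros H; apply clos_rt_rt1n in H; remember (Srt s) as X; induction H; subst; auto.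
  inversion H.
Qed.

Lemma beta_star_pi_inv (A B T : tm) : beta_star (Pi A B) T ->
  exists A' B', T = Pi A' B' /\ beta_star A A' /\ beta_star B B'.
Proof.
  intros H; apply clos_rt_rt1n in H; remember (Pi A B) as X eqn:E; revert A B E.
  induction H; intros A B E; subst.
  - exists A, B; auto using beta_star_refl.
  - inversion H; subst;
      [destruct (IHclos_refl_trans_1n A' B eq_refl) as [A2 [B2 [? [? ?]]]]
      | destruct (IHclos_refl_trans_1n A B' eq_refl) as [A2 [B2 [? [? ?]]]]];
      exists A2, B2; repeat split; eauto using beta_star_trans, beta_star_step.
Qed.

Lemma beta_conv_srt_inv s1 s2 : beta_conv (Srt s1 : tm) (Srt s2) -> s1 = s2.
Proof.
  intros H; destruct (church_rosser H) as [P [H1 H2]].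
  apply beta_star_srt_inv in H1; apply beta_star_srt_inv in H2; congruence.
Qed.

Lemma beta_conv_pi_srt (A B : tm) s : ~ beta_conv (Pi A B) (Srt s).
Proof.
  intros H; destruct (church_rosser H) as [P [H1 H2]].
  apply beta_star_srt_inv in H2; apply beta_star_pi_inv in H1 as [? [? [? _]]]; congruence.
Qed.

Lemma beta_conv_pi_inv (A B A' B' : tm) :
  beta_conv (Pi A B) (Pi A' B') -> beta_conv A A' /\ beta_conv B B'.
Proof.
  intros H; destruct (church_rosser H) as [P [H1 H2]].
  apply beta_star_pi_inv in H1 as [A1 [B1 [E1 [? ?]]]].
  apply beta_star_pi_inv in H2 as [A2 [B2 [E2 [? ?]]]].
  subst; inversion E2; subst.
  split; eapply beta_conv_trans; eauto using beta_star_conv, beta_conv_sym.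
Qed.

End Beta.

Section Metatheory.
Context {srt : Type} (P : spec srt).
Notation tm := (term srt).
Notation typ := (typ P).
Notation wf := (wf P).

Lemma typ_wf G M T : typ G M T -> wf G.
Proof. induction 1; auto. Qed.

Lemma typ_srt_inv G s T : typ G (Srt s) T -> exists s', ax P s s' /\ beta_conv (Srt s') T.
Proof.
  intros H; remember (Srt s) as X; induction H; try discriminate.
  - inversion HeqX; subst; eauto using beta_conv_refl.
  - destruct (IHtyp1 HeqX) as [s' [? ?]]; eauto using beta_conv_trans.
Qed.

Lemma typ_var_inv G n T : typ G (Var n) T ->
  exists A, nth_error G n = Some A /\ beta_conv (lift (S n) A) T.
Proof.
  intros H; remember (Var n) as X; induction H; try discriminate.
  - inversion HeqX; subst; eauto using beta_conv_refl.
  - destruct (IHtyp1 HeqX) as [A' [? ?]]; eauto using beta_conv_trans.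
Qed.

Lemma typ_pi_inv G A B T : typ G (Pi A B) T ->
  exists s1 s2 s3, typ G A (Srt s1) /\ typ (A :: G) B (Srt s2) /\ rl P s1 s2 s3 /\
                   beta_conv (Srt s3) T.
Proof.
  intros H; remember (Pi A B) as X; induction H; try discriminate.
  - inversion HeqX; subst; exists s1, s2, s3; auto using beta_conv_refl.
  - destruct (IHtyp1 HeqX) as [s1 [s2 [s3 [? [? [? ?]]]]]].
    exists s1, s2, s3; eauto using beta_conv_trans.
Qed.

Lemma typ_lam_inv G A M T : typ G (Lam A M) T ->
  exists B s, typ (A :: G) M B /\ typ G (Pi A B) (Srt s) /\ beta_conv (Pi A B) T.
Proof.
  intros H; remember (Lam A M) as X; induction H; try discriminate.
  - inversion HeqX; subst; exists B, s; auto using beta_conv_refl.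
  - destruct (IHtyp1 HeqX) as [B' [s' [? [? ?]]]]; exists B', s'; eauto using beta_conv_trans.
Qed.

Lemma typ_app_inv G M N T : typ G (App M N) T ->
  exists A B, typ G M (Pi A B) /\ typ G N A /\ beta_conv (subst N B) T.
Proof.
  intros H; remember (App M N) as X; induction H; try discriminate.
  - inversion HeqX; subst; exists A, B; auto using beta_conv_refl.
  - destruct (IHtyp1 HeqX) as [A' [B' [? [? ?]]]]; exists A', B'; eauto using beta_conv_trans.
Qed.

Definition ren_typed (G : context srt) (xi : nat -> nat) (D : context srt) :=
  forall n A, nth_error G n = Some A ->
  exists A', nth_error D (xi n) = Some A' /\ ren xi (lift (S n) A) = lift (S (xi n)) A'.

Lemma ren_upren_lift1 (X : tm) xi : ren (upren xi) (lift 1 X) = lift 1 (ren xi X).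
Proof. rewrite !lift1_as_ren, !ren_ren; reflexivity. Qed.

Lemma ren_typed_up G xi D A :
  ren_typed G xi D -> ren_typed (A :: G) (upren xi) (ren xi A :: D).
Proof.
  intros H [|n] B E; simpl in *.
  - inversion E; subst; exists (ren xi B); split; auto using ren_upren_lift1.
  - destruct (H n B E) as [A' [E1 E2]]; exists A'; split; auto.
    rewrite lift_S, ren_upren_lift1, E2, lift_lift; auto.
Qed.

Lemma typ_ren G M T : typ G M T ->
  forall D xi, wf D -> ren_typed G xi D -> typ D (ren xi M) (ren xi T).
Proof.
  induction 1; intros D xi HD Hr; simpl.
  - constructor; auto.
  - destruct (Hr n A H0) as [A' [E1 E2]]; rewrite E2; constructor; auto.
  - assert (HA := IHtyp1 D xi HD Hr); simpl in HA.
    econstructor; eauto. apply IHtyp2; [econstructor; eauto | apply ren_typed_up; auto].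
  - assert (HP := IHtyp2 D xi HD Hr); simpl in HP.
    destruct (typ_pi_inv HP) as [s1 [? [? [? _]]]].
    econstructor; eauto. apply IHtyp1; [econstructor; eauto | apply ren_typed_up; auto].
  - rewrite ren_subst; econstructor; eauto.
  - econstructor; eauto. rewrite !ren_as_inst; apply beta_conv_inst; auto.
Qed.

Lemma typ_weaken D M T G0 : typ D M T -> wf (G0 ++ D) ->
  typ (G0 ++ D) (lift (length G0) M) (lift (length G0) T).
Proof.
  intros HM HW; unfold lift; rewrite !lift_rec_as_ren; apply (typ_ren HM HW).
  intros n A E; exists A; split.
  - unfold lift_index; simpl; rewrite nth_error_app2; [|lia].
    rewrite <- E; f_equal; lia.
  - unfold lift; rewrite !lift_rec_as_ren, ren_ren; apply ren_ext; intros.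
    unfold lift_index; simpl; lia.
Qed.

Lemma typ_weaken1 G M T X : typ G M T -> wf (X :: G) -> typ (X :: G) (lift 1 M) (lift 1 T).
Proof. apply (typ_weaken [X]). Qed.

Definition subst_typed (G : context srt) (sg : nat -> tm) (D : context srt) :=
  forall n A, nth_error G n = Some A -> typ D (sg n) (inst sg (lift (S n) A)).

Lemma subst_typed_up G sg D A s : subst_typed G sg D -> typ D (inst sg A) (Srt s) ->
  subst_typed (A :: G) (up sg) (inst sg A :: D).
Proof.
  intros H HA [|n] B E; simpl in *.
  - inversion E; subst; rewrite inst_up_lift1; constructor; auto; econstructor; eauto.
  - rewrite lift_S, inst_up_lift1, <- lift1_as_ren.
    apply typ_weaken1; auto; econstructor; eauto.
Qed.

Lemma typ_inst G M T : typ G M T ->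
  forall D sg, wf D -> subst_typed G sg D -> typ D (inst sg M) (inst sg T).
Proof.
  induction 1; intros D sg HD Hs; simpl.
  - constructor; auto.
  - apply Hs; auto.
  - assert (HA := IHtyp1 D sg HD Hs); simpl in HA.
    econstructor; eauto. apply IHtyp2; [econstructor; eauto | eapply subst_typed_up; eauto].
  - assert (HP := IHtyp2 D sg HD Hs); simpl in HP.
    destruct (typ_pi_inv HP) as [s1 [? [? [? _]]]].
    econstructor; eauto. apply IHtyp1; [econstructor; eauto | eapply subst_typed_up; eauto].
  - rewrite inst_subst; econstructor; eauto.
  - econstructor; eauto using beta_conv_inst.
Qed.

Lemma subst_typed_shift G X : wf (X :: G) -> subst_typed G (fun i => Var (S i)) (X :: G).
Proof.
  intros HW n A E; rewrite <- (lift_as_inst _ 1), lift_lift; constructor; auto.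
Qed.

Lemma subst_typed_scons G N A : typ G N A -> subst_typed (A :: G) (scons N Var) G.
Proof.
  intros HN [|n] B E; simpl in *.
  - inversion E; subst; rewrite <- subst_as_inst, subst_lift1; auto.
  - rewrite inst_lift; simpl; rewrite <- (lift_as_inst _ (S n)).
    constructor; eauto using typ_wf.
Qed.

Lemma subst_typed_conv G A A' s : wf (A :: G) -> typ G A' (Srt s) -> beta_conv A A' ->
  subst_typed (A :: G) Var (A' :: G).
Proof.
  intros HW HA' Hc.
  assert (HW' : wf (A' :: G)) by (econstructor; eauto).
  intros [|n] B E; simpl in *; rewrite inst_var.
  - inversion E; subst; inversion HW as [|G0 B0 s0 Hs0]; subst.
    apply typ_conv with (lift 1 A') s0.
    + constructor; auto.
    + apply (typ_weaken1 (T := Srt s0)); auto.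
    + apply beta_conv_lift_rec, beta_conv_sym; auto.
  - constructor; auto.
Qed.

Lemma typ_subst G A M T N : typ (A :: G) M T -> typ G N A -> typ G (subst N M) (subst N T).
Proof.
  intros HM HN; rewrite !subst_as_inst.
  eapply typ_inst; eauto using typ_wf, subst_typed_scons.
Qed.

Lemma typ_ctx_conv G A A' M T s : typ (A :: G) M T -> typ G A' (Srt s) -> beta_conv A A' ->
  typ (A' :: G) M T.
Proof.
  intros H HA' Hc; rewrite <- (inst_var M), <- (inst_var T).
  eapply typ_inst; eauto using subst_typed_conv, typ_wf.
  econstructor; eauto.
Qed.

Lemma wf_nth_error_sort G n A : wf G -> nth_error G n = Some A ->
  exists s, typ G (lift (S n) A) (Srt s).
Proof.
  revert n; induction G as [|B G IH]; intros n HG E; [destruct n; discriminate|].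
  inversion HG as [|G0 B0 s Hs]; subst; destruct n as [|n]; simpl in E.
  - inversion E; subst; exists s; apply (typ_weaken1 (T := Srt s)); auto.
  - destruct (IH n (typ_wf Hs) E) as [s' Hs']; exists s'.
    rewrite lift_S; apply (typ_weaken1 (T := Srt s')); auto.
Qed.

Lemma type_correctness G M T : typ G M T ->
  (exists s, T = Srt s) \/ (exists s, typ G T (Srt s)).
Proof.
  induction 1; eauto.
  - right; eapply wf_nth_error_sort; eauto.
  - destruct IHtyp1 as [[s E] | [s HP]]; [discriminate|].
    destruct (typ_pi_inv HP) as [s1 [s2 [s3 [? [HB [? _]]]]]].
    right; exists s2; apply (typ_subst (T := Srt s2) HB); auto.
Qed.

Lemma typ_codomain G M A B : typ G M (Pi A B) -> exists s, typ (A :: G) B (Srt s).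
Proof.
  intros H; destruct (type_correctness H) as [[s E] | [s HP]]; [discriminate|].
  destruct (typ_pi_inv HP) as [s1 [s2 [s3 [_ [HB _]]]]]; eauto.
Qed.

Lemma typ_beta_redex G A M A' B N : typ G (Lam A M) (Pi A' B) -> typ G N A' ->
  typ G (subst N M) (subst N B).
Proof.
  intros HL HN; destruct (typ_lam_inv HL) as [B0 [s [HM [HP Hc]]]].
  destruct (beta_conv_pi_inv Hc) as [HcA HcB].
  destruct (typ_pi_inv HP) as [s1 [s2 [s3 [HA _]]]].
  destruct (typ_codomain HL) as [t2 HB].
  apply typ_conv with (subst N B0) t2.
  - eapply typ_subst; eauto; apply typ_conv with A' s1; auto using beta_conv_sym.
  - apply (typ_subst (T := Srt t2) HB); auto.
  - apply beta_conv_subst; auto.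
Qed.

Lemma subject_reduction1 G M T : typ G M T -> forall M', beta1 M M' -> typ G M' T.
Proof.
  induction 1; intros M' Hb;
    inversion Hb as [| ? ? ? Hr | ? ? ? Hr | ? ? ? Hr | ? ? ? Hr | ? ? ? Hr | ? ? ? Hr]; subst;
    try (econstructor; eauto; fail).
  - econstructor; eauto.
    apply typ_ctx_conv with A s1; auto; apply rst_step; auto.
  - assert (HP := IHtyp2 _ (beta_pi_l B Hr)).
    destruct (typ_pi_inv HP) as [s1 [s2 [s3 [HA' _]]]].
    apply typ_conv with (Pi A' B) s; auto.
    + apply typ_lam with s; auto; apply typ_ctx_conv with A s1; auto; apply rst_step; auto.
    + apply beta_conv_sym, rst_step; constructor; auto.
  - eapply typ_beta_redex; eauto.
  - destruct (typ_codomain H) as [t2 HB].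
    apply typ_conv with (subst N' B) t2.
    + econstructor; eauto.
    + apply (typ_subst (T := Srt t2) HB); auto.
    + apply beta_conv_sym, beta_star_conv, beta_star_subst;
        auto using beta_star_refl, beta_star_step.
Qed.

Lemma subject_reduction G M T M' : typ G M T -> beta_star M M' -> typ G M' T.
Proof. intros H Hb; revert H; induction Hb; eauto using subject_reduction1. Qed.

Lemma typ_beta_star_type G M T T' s :
  typ G M T -> typ G T (Srt s) -> beta_star T T' -> typ G M T'.
Proof.
  intros; apply typ_conv with T s; eauto using subject_reduction, beta_star_conv.
Qed.

Lemma typ_unique : functional P ->
  forall G M T1, typ G M T1 -> forall T2, typ G M T2 -> beta_conv T1 T2.
Proof.
  intros [Fa Fr] G M T1 H; induction H; intros T2 H2.
  - destruct (typ_srt_inv H2) as [s' [? ?]]; rewrite (Fa _ _ _ H0 H1); auto.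
  - destruct (typ_var_inv H2) as [A' [E ?]]; rewrite H0 in E; inversion E; subst; auto.
  - destruct (typ_pi_inv H2) as [t1 [t2 [t3 [HA [HB [Hr Hc]]]]]].
    pose proof (beta_conv_srt_inv (IHtyp1 _ HA)); pose proof (beta_conv_srt_inv (IHtyp2 _ HB)).
    subst; rewrite (Fr _ _ _ _ H1 Hr); auto.
  - destruct (typ_lam_inv H2) as [B' [s' [HM [_ Hc]]]].
    eapply beta_conv_trans; [|eauto]; apply beta_conv_pi; auto using beta_conv_refl.
  - destruct (typ_app_inv H2) as [A' [B' [HM [HN Hc]]]].
    destruct (beta_conv_pi_inv (IHtyp1 _ HM)) as [_ HcB].
    eapply beta_conv_trans; [|eauto]; apply beta_conv_subst; auto.
  - eapply beta_conv_trans; [apply beta_conv_sym|]; eauto.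
Qed.

Lemma beta_conv_types_sort : functional P -> forall G A B x y,
  typ G A (Srt x) -> typ G B (Srt y) -> beta_conv A B -> x = y.
Proof.
  intros HF G A B x y HA HB Hc; destruct (church_rosser Hc) as [C [H1 H2]].
  apply beta_conv_srt_inv, (typ_unique HF (subject_reduction HA H1) (subject_reduction HB H2)).
Qed.

End Metatheory.

Section Embedding.
Context {srt : Type}.
Notation tm := (term srt).
Notation tm' := (term (option srt)).

Lemma emb_lift_rec (t : tm) n k : emb (lift_rec n t k) = lift_rec n (emb t) k.
Proof. revert k; induction t; intros; simpl; f_equal; auto; destruct (k <=? n0); auto. Qed.

Lemma emb_lift (t : tm) n : emb (lift n t) = lift n (emb t).
Proof. apply emb_lift_rec. Qed.

Lemma emb_subst (t N : tm) : emb (subst N t) = subst (emb N) (emb t).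
Proof.
  unfold subst; generalize 0; induction t; intros k; simpl; f_equal; auto.
  destruct (n <? k); auto; destruct (n =? k); auto; apply emb_lift.
Qed.

Lemma emb_inj (M N : tm) : emb M = emb N -> M = N.
Proof.
  revert N; induction M; intros []; simpl; intros E; try discriminate;
    inversion E; f_equal; auto.
Qed.

Lemma beta1_emb (M M' : tm) : beta1 M M' -> beta1 (emb M) (emb M').
Proof. induction 1; simpl; try (constructor; auto; fail); rewrite emb_subst; constructor. Qed.

Lemma beta_conv_emb (M M' : tm) : beta_conv M M' -> beta_conv (emb M) (emb M').
Proof. apply beta_conv_map, beta1_emb. Qed.

Lemma beta1_emb_inv (M : tm) (N : tm') : beta1 (emb M) N -> exists M', N = emb M' /\ beta1 M M'.
Proof.
  revert N; induction M; intros N H; simpl in H;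
    inversion H as [? ? ? E | ? ? ? Hr | ? ? ? Hr | ? ? ? Hr | ? ? ? Hr | ? ? ? Hr | ? ? ? Hr];
    subst.
  - destruct M1; simpl in *; try discriminate; inversion E; subst.
    exists (subst M2 M1_2); split; [symmetry; apply emb_subst | constructor].
  - destruct (IHM1 _ Hr) as [X [-> ?]]; exists (App X M2); split; auto; constructor; auto.
  - destruct (IHM2 _ Hr) as [X [-> ?]]; exists (App M1 X); split; auto; constructor; auto.
  - destruct (IHM1 _ Hr) as [X [-> ?]]; exists (Lam X M2); split; auto; constructor; auto.
  - destruct (IHM2 _ Hr) as [X [-> ?]]; exists (Lam M1 X); split; auto; constructor; auto.
  - destruct (IHM1 _ Hr) as [X [-> ?]]; exists (Pi X M2); split; auto; constructor; auto.
  - destruct (IHM2 _ Hr) as [X [-> ?]]; exists (Pi M1 X); split; auto; constructor; auto.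
Qed.

Lemma beta_star_emb_inv (M : tm) (N : tm') :
  beta_star (emb M) N -> exists M', N = emb M' /\ beta_star M M'.
Proof.
  intros H; apply clos_rt_rt1n in H; remember (emb M) as X eqn:E; revert M E.
  induction H; intros M E; subst.
  - exists M; split; auto using beta_star_refl.
  - destruct (beta1_emb_inv _ H) as [M1 [-> ?]].
    destruct (IHclos_refl_trans_1n M1 eq_refl) as [M2 [-> ?]].
    exists M2; split; eauto using beta_star_trans, beta_star_step.
Qed.

Lemma beta_conv_emb_inv (A B : tm) : beta_conv (emb A) (emb B) -> beta_conv A B.
Proof.
  intros H; destruct (church_rosser H) as [P [H1 H2]].
  destruct (beta_star_emb_inv _ H1) as [A1 [-> ?]].
  destruct (beta_star_emb_inv _ H2) as [B1 [E ?]]; apply emb_inj in E; subst.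
  eapply beta_conv_trans; [| apply beta_conv_sym]; apply beta_star_conv; eauto.
Qed.

Lemma nth_error_map_emb (G : context srt) n :
  nth_error (map emb G) n = option_map emb (nth_error G n).
Proof. apply nth_error_map. Qed.

End Embedding.

Scheme wf_typ_ind := Induction for wf Sort Prop with typ_wf_ind := Induction for typ Sort Prop.

Section Completion.
Context {srt : Type} (S : spec srt).
Notation tm' := (term (option srt)).
Notation SS := (completion S).

Lemma wf_typ_emb :
  (forall G, wf S G -> wf SS (map emb G)) /\
  (forall G M T, typ S G M T -> typ SS (map emb G) (emb M) (emb T)).
Proof.
  set (P0 := fun G (_ : wf S G) => wf SS (map emb G)).
  set (P1 := fun G M T (_ : typ S G M T) => typ SS (map emb G) (emb M) (emb T)).
  split; [apply (wf_typ_ind P0 P1) | apply (typ_wf_ind P0 P1)]; unfold P0, P1;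
    intros; simpl in *; try (econstructor; eauto; fail).
  all: try (rewrite emb_lift; constructor; auto; rewrite nth_error_map_emb, e; auto; fail).
  all: try (apply typ_pi with (Some s1) (Some s2); auto; simpl; exists s1, s2; auto; fail).
  all: try (rewrite emb_subst; econstructor; eauto; fail).
  all: econstructor; eauto using beta_conv_emb.
Qed.

Lemma typ_emb G M T : typ S G M T -> typ SS (map emb G) (emb M) (emb T).
Proof. apply wf_typ_emb. Qed.

Lemma completion_functional : functional S -> functional SS.
Proof.
  intros [Fa Fr]; split.
  - intros [s|] [s1|] [s2|]; simpl; intros H1 H2; try contradiction; auto.
    + f_equal; eauto.
    + exfalso; apply H2; eauto.
    + exfalso; apply H1; eauto.
  - intros x y [s3|] [s3'|]; simpl; intros H1 H2; auto.
    + destruct H1 as [a [b [-> [-> ?]]]]; destruct H2 as [a' [b' [E1 [E2 ?]]]].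
      inversion E1; inversion E2; subst; f_equal; eauto.
    + exfalso; apply H2; destruct H1 as [a [b [? [? ?]]]]; eauto 7.
    + exfalso; apply H1; destruct H2 as [a [b [? [? ?]]]]; eauto 7.
Qed.

Lemma tau_untyped G T : ~ typ SS G (Srt None) T.
Proof. intros H; destruct (typ_srt_inv H) as [s' [Hx _]]; contradiction. Qed.

Lemma subst_rec_eq_srt (B N : tm') k x : subst_rec N B k = Srt x ->
  B = Srt x \/ (B = Var k /\ lift k N = Srt x).
Proof.
  destruct B; simpl; intros E; try discriminate; auto.
  destruct (Nat.ltb_spec n k); try discriminate.
  destruct (Nat.eqb_spec n k); try discriminate; subst; auto.
Qed.

Lemma lift_rec_eq_srt (N : tm') n k x : lift_rec n N k = Srt x -> N = Srt x.
Proof. destruct N; simpl; try discriminate; auto; destruct (k <=? n0); discriminate. Qed.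

(* A variable or an application of type tau would make tau itself typed. *)
Lemma typ_tau_inv G T : typ SS G T (Srt None) ->
  (exists s, T = Srt (Some s)) \/ (exists A B, T = Pi A B).
Proof.
  intros H; remember (Srt None) as X; induction H; subst; eauto.
  - destruct s1; simpl in H0; [eauto | contradiction].
  - destruct (wf_nth_error_sort n H H0) as [s Hs]; apply lift_rec_eq_srt in HeqX; subst.
    exfalso; eapply tau_untyped; eauto.
  - discriminate.
  - exfalso; destruct (subst_rec_eq_srt _ _ _ HeqX) as [E | [E1 E2]]; subst.
    + destruct (typ_codomain H) as [s HB]; eapply tau_untyped; eauto.
    + unfold lift in E2; rewrite lift_rec0 in E2; subst; eapply tau_untyped; eauto.
  - exfalso; eapply tau_untyped; eauto.
Qed.

End Completion.

Inductive skeleton := SkBase | SkArrow (a b : skeleton).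

Section Skeleton.
Context {srt : Type} (Sp : spec srt) (HF : functional Sp).
Notation tm' := (term (option srt)).
Notation SS := (completion Sp).

Inductive has_skeleton : context (option srt) -> tm' -> skeleton -> Prop :=
| has_skeleton_base G T :
    (exists s, typ SS G T (Srt (Some s)) \/ T = Srt (Some s)) -> has_skeleton G T SkBase
| has_skeleton_arrow G A B a b :
    typ SS G (Pi A B) (Srt None) -> has_skeleton G A a -> has_skeleton (A :: G) B b ->
    has_skeleton G (Pi A B) (SkArrow a b).

Lemma typ_tau_base_is_sort G T : typ SS G T (Srt None) ->
  (exists s, typ SS G T (Srt (Some s)) \/ T = Srt (Some s)) -> exists s, T = Srt (Some s).
Proof.
  intros H [s [Hs | E]]; eauto.
  exfalso.
  pose proof (beta_conv_srt_inv (typ_unique (completion_functional HF) H Hs)); discriminate.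
Qed.

Lemma has_skeleton_unique G T k1 k2 : has_skeleton G T k1 -> has_skeleton G T k2 -> k1 = k2.
Proof.
  intros H; revert k2; induction H as [G T HT | G A B a b HP Ha IHa Hb IHb];
    intros k2 H2; inversion H2 as [? ? HT' | ? ? ? ? ? HP']; subst; auto.
  - destruct (typ_tau_base_is_sort HP' HT) as [s E]; discriminate.
  - destruct (typ_tau_base_is_sort HP HT') as [s E]; discriminate.
  - f_equal; auto.
Qed.

Lemma has_skeleton_srt_inv G x k : has_skeleton G (Srt x) k ->
  k = SkBase /\ exists s, x = Some s.
Proof.
  inversion 1 as [? ? [s [Hs | E]] |]; subst; split; auto.
  - destruct (typ_srt_inv Hs) as [s' [Hx _]]; destruct x; [eauto | contradiction].
  - inversion E; eauto.
Qed.

Lemma has_skeleton_inst G T k : has_skeleton G T k ->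
  forall D sg, wf SS D -> subst_typed SS G sg D -> has_skeleton D (inst sg T) k.
Proof.
  induction 1 as [G T [s HT] | G A B a b HP Ha IHa Hb IHb]; intros D sg HD Hs.
  - constructor; exists s; destruct HT as [HT | ->]; [left | right; reflexivity].
    apply (typ_inst (T := Srt (Some s)) HT); auto.
  - assert (HP' := typ_inst (T := Srt None) HP HD Hs); simpl in HP'.
    destruct (typ_pi_inv HP') as [s1 [s2 [s3 [HA _]]]].
    constructor; auto; apply IHb; [econstructor; eauto | eapply subst_typed_up; eauto].
Qed.

Lemma has_skeleton_weaken1 G T k X : has_skeleton G T k -> wf SS (X :: G) ->
  has_skeleton (X :: G) (lift 1 T) k.
Proof.
  intros; rewrite (lift_as_inst _ 1); eapply has_skeleton_inst; eauto.
  apply subst_typed_shift; auto.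
Qed.

Lemma has_skeleton_subst G A B k N : has_skeleton (A :: G) B k -> typ SS G N A ->
  has_skeleton G (subst N B) k.
Proof.
  intros; rewrite subst_as_inst; eapply has_skeleton_inst; eauto using typ_wf.
  apply subst_typed_scons; auto.
Qed.

Lemma has_skeleton_exists G T x : typ SS G T (Srt x) -> exists k, has_skeleton G T k.
Proof.
  revert G x; induction T; intros G [sx|] H;
    try (exists SkBase; constructor; exists sx; auto; fail).
  all: destruct (typ_tau_inv H) as [[s0 E] | [A0 [B0 E]]]; try discriminate.
  - inversion E; subst; exists SkBase; constructor; eauto.
  - inversion E; subst; destruct (typ_pi_inv H) as [x1 [x2 [x3 [HA [HB _]]]]].
    destruct (IHT1 _ _ HA) as [a Ha]; destruct (IHT2 _ _ HB) as [b Hb].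
    exists (SkArrow a b); constructor; auto.
Qed.

Lemma has_skeleton_conv G B k : has_skeleton G B k -> forall A, beta_conv A B ->
  (exists y, typ SS G A (Srt y)) \/ (exists s, A = Srt (Some s)) -> has_skeleton G A k.
Proof.
  assert (HFS := completion_functional HF).
  induction 1 as [G T [s HT] | G A B a b HP Ha IHa Hb IHb];
    intros A' Hc [[y HA'] | [s' ->]]; try (constructor; eauto; fail).
  - destruct y as [y|]; [constructor; eauto|].
    destruct (typ_tau_inv HA') as [[s' ->] | [A1 [B1 ->]]]; [constructor; eauto|].
    exfalso; destruct HT as [HT | ->].
    + pose proof (beta_conv_types_sort HFS HA' HT Hc); discriminate.
    + eapply beta_conv_pi_srt; eauto.
  - destruct y as [y|].
    { pose proof (beta_conv_types_sort HFS HA' HP Hc); discriminate. }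
    destruct (typ_tau_inv HA') as [[s' ->] | [A1 [B1 ->]]].
    { exfalso; eapply beta_conv_pi_srt, beta_conv_sym; eauto. }
    destruct (beta_conv_pi_inv Hc) as [HcA HcB].
    destruct (typ_pi_inv HA') as [x1 [x2 [x3 [HA1 [HB1 _]]]]].
    destruct (typ_pi_inv HP) as [y1 [y2 [y3 [HA0 [HB0 _]]]]].
    constructor; eauto.
    assert (HB1' : typ SS (A :: G) B1 (Srt x2)) by (apply typ_ctx_conv with A1 y1; auto).
    rewrite <- (inst_var B1); eapply has_skeleton_inst; eauto.
    + econstructor; eauto.
    + eapply subst_typed_conv; eauto using beta_conv_sym; econstructor; eauto.
  - exfalso; eapply beta_conv_pi_srt, beta_conv_sym; eauto.
Qed.

End Skeleton.

Section Reducibility.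
Context {srt : Type} (Sp : spec srt) (HF : functional Sp).
Notation tm := (term srt).
Notation tm' := (term (option srt)).
Notation SS := (completion Sp).

Definition type_or_sort (D : context srt) (T : tm) : Prop :=
  exists s, typ Sp D T (Srt s) \/ T = Srt s.

Definition base_red (D : context srt) (T M : tm') : Prop :=
  exists T' M', beta_conv T (emb T') /\ beta_star M (emb M') /\
                typ Sp D M' T' /\ type_or_sort D T'.

(* Kripke function space: [G0] is the extension of the context [D] in which
   the argument [N] lives, so [A], [B] and [M] have to be lifted over it. *)
Fixpoint red (k : skeleton) (D : context srt) (T M : tm') : Prop :=
  match k with
  | SkBase => base_red D T M
  | SkArrow a b => exists A B, beta_conv T (Pi A B) /\
      forall G0 N, wf Sp (G0 ++ D) -> red a (G0 ++ D) (lift (length G0) A) N ->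
        red b (G0 ++ D) (subst N (lift_rec (length G0) B 1)) (App (lift (length G0) M) N)
  end.

Lemma red_conv k D T T' M : red k D T M -> beta_conv T T' -> red k D T' M.
Proof.
  destruct k; simpl; intros [X [Y [Hc H]]] Hc'; exists X, Y;
    split; eauto using beta_conv_trans, beta_conv_sym.
Qed.

Lemma red_beta_star_expand k D T M M1 : beta_star M M1 -> red k D T M1 -> red k D T M.
Proof.
  revert D T M M1; induction k as [|a _ b IHb]; simpl; intros D T M M1 Hb.
  - intros [T1 [M2 [? [? ?]]]]; exists T1, M2; split; [|split]; eauto using beta_star_trans.
  - intros [A [B [Hc H]]]; exists A, B; split; auto.
    intros G0 N HW HN; eapply IHb; [|apply H; eauto].
    apply beta_star_app; [apply beta_star_lift_rec; auto | apply beta_star_refl].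
Qed.

Lemma type_or_sort_weaken D G0 T : type_or_sort D T -> wf Sp (G0 ++ D) ->
  type_or_sort (G0 ++ D) (lift (length G0) T).
Proof.
  intros [s [H | ->]] HW; exists s; [left; apply (typ_weaken (T := Srt s)) | right]; auto.
Qed.

Lemma red_weaken k D T M G0 : red k D T M -> wf Sp (G0 ++ D) ->
  red k (G0 ++ D) (lift (length G0) T) (lift (length G0) M).
Proof.
  destruct k as [|a b]; simpl.
  - intros [T1 [M1 [H1 [H2 [H3 H4]]]]] HW.
    exists (lift (length G0) T1), (lift (length G0) M1); rewrite !emb_lift.
    repeat split;
      [apply beta_conv_lift_rec | apply beta_star_lift_rec | apply typ_weaken
      | apply type_or_sort_weaken]; auto.
  - intros [A [B [Hc H]]] HW.
    exists (lift (length G0) A), (lift_rec (length G0) B 1); split.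
    + apply (beta_conv_lift_rec (length G0) 0 Hc).
    + intros G1 N HW1 HN.
      specialize (H (G1 ++ G0) N); rewrite <- app_assoc, length_app in H.
      rewrite lift_lift in HN; specialize (H HW1 HN).
      rewrite lift_rec1_lift_rec1, lift_lift; auto.
Qed.

Lemma base_red_typed D A M : base_red D (emb A) M -> type_or_sort D A ->
  exists M', beta_star M (emb M') /\ typ Sp D M' A.
Proof.
  intros [T' [M' [Hc [Hb [Ht [t HT']]]]]] [s HA]; exists M'; split; auto.
  apply beta_conv_emb_inv in Hc.
  destruct HA as [HA | ->]; [apply typ_conv with T' s; auto using beta_conv_sym|].
  destruct (church_rosser Hc) as [C [HC1 HC2]]; apply beta_star_srt_inv in HC1; subst.
  destruct HT' as [HT' | ->]; [eapply typ_beta_star_type; eauto|].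
  apply beta_star_srt_inv in HC2; inversion HC2; subst; auto.
Qed.

Lemma base_red_pi D A B M : base_red D (Pi A B) M ->
  exists A' B' M', beta_star A (emb A') /\ beta_star B (emb B') /\ beta_star M (emb M') /\
    typ Sp D M' (Pi A' B') /\ exists t, typ Sp D (Pi A' B') (Srt t).
Proof.
  intros [T' [M' [Hc [HM [HT [t HT']]]]]].
  destruct (church_rosser Hc) as [C [HC1 HC2]].
  destruct (beta_star_pi_inv HC1) as [C1 [C2 [-> [HA HB]]]].
  destruct (beta_star_emb_inv _ HC2) as [T'' [ET HT'']].
  destruct T'' as [| | | | A' B']; inversion ET; subst.
  destruct HT' as [HT' | ->]; [| apply beta_star_srt_inv in HT''; discriminate].
  exists A', B', M'; repeat split; eauto using subject_reduction, typ_beta_star_type.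
Qed.

Definition red_env (G : context (option srt)) (D : context srt) (sg : nat -> tm') : Prop :=
  forall n A, nth_error G n = Some A -> forall k, has_skeleton Sp G (lift (S n) A) k ->
  red k D (inst sg (lift (S n) A)) (sg n).

Lemma has_skeleton_nth_error G n B : wf SS G -> nth_error G n = Some B ->
  exists k, has_skeleton Sp G (lift (S n) B) k.
Proof.
  intros HG E; destruct (wf_nth_error_sort n HG E) as [x Hx].
  eapply has_skeleton_exists; eauto.
Qed.

Lemma red_env_weaken_skeleton G D sg n B k X : wf SS (X :: G) -> red_env G D sg ->
  nth_error G n = Some B -> has_skeleton Sp (X :: G) (lift (S (S n)) B) k ->
  red k D (inst sg (lift (S n) B)) (sg n).
Proof.
  intros HW HE E Hk; inversion HW as [|? ? ? HX]; subst.
  destruct (has_skeleton_nth_error n (typ_wf HX) E) as [k' Hk'].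
  assert (Hw := has_skeleton_weaken1 Hk' HW); rewrite <- lift_S in Hw.
  rewrite (has_skeleton_unique HF Hk Hw); apply HE; auto.
Qed.

Lemma red_env_up G D sg A A' s1 s1' : wf SS G -> red_env G D sg ->
  typ SS G A (Srt (Some s1)) -> beta_conv (inst sg A) (emb A') -> typ Sp D A' (Srt s1') ->
  red_env (A :: G) (A' :: D) (up sg).
Proof.
  intros HG HE HA Hc HA'.
  assert (HW : wf SS (A :: G)) by (econstructor; eauto).
  assert (HW' : wf Sp (A' :: D)) by (econstructor; eauto).
  intros [|n] B E k Hk; simpl in E.
  - inversion E; subst.
    assert (Hb : has_skeleton Sp (B :: G) (lift 1 B) SkBase).
    { constructor; exists s1; left; apply (typ_weaken1 (T := Srt (Some s1))); auto. }
    rewrite (has_skeleton_unique HF Hk Hb); simpl.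
    exists (lift 1 A'), (Var 0); repeat split.
    + rewrite inst_up_lift1, emb_lift; apply beta_conv_lift_rec; auto.
    + apply beta_star_refl.
    + constructor; auto.
    + exists s1'; left; apply (typ_weaken1 (T := Srt s1')); auto.
  - assert (HI := red_env_weaken_skeleton n HW HE E Hk).
    apply (red_weaken _ _ _ _ [A']) in HI; auto; simpl in HI.
    simpl; rewrite lift_S, inst_up_lift1, <- lift1_as_ren; exact HI.
Qed.

Lemma red_env_scons G D sg A a G0 N : wf SS (A :: G) -> red_env G D sg -> wf Sp (G0 ++ D) ->
  has_skeleton Sp G A a -> red a (G0 ++ D) (lift (length G0) (inst sg A)) N ->
  red_env (A :: G) (G0 ++ D) (scons N (fun i => lift (length G0) (sg i))).
Proof.
  intros HW HE HWD Ha HN [|n] B E k Hk; simpl in E.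
  - inversion E; subst.
    rewrite (has_skeleton_unique HF Hk (has_skeleton_weaken1 Ha HW)); simpl.
    rewrite inst_lift; simpl; rewrite <- lift_inst; exact HN.
  - assert (HI := red_env_weaken_skeleton n HW HE E Hk).
    apply (red_weaken _ _ _ _ G0) in HI; auto.
    rewrite lift_inst, !inst_lift in HI; rewrite inst_lift; exact HI.
Qed.

Lemma red_env_emb G : wf Sp G -> red_env (map emb G) G Var.
Proof.
  intros HG n A0 E k Hk; rewrite nth_error_map_emb in E.
  destruct (nth_error G n) as [A|] eqn:EA; inversion E; subst.
  destruct (wf_nth_error_sort n HG EA) as [s HA].
  assert (Hb : has_skeleton Sp (map emb G) (lift (S n) (emb A)) SkBase).
  { constructor; exists s; left; rewrite <- emb_lift; apply (typ_emb HA). }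
  rewrite (has_skeleton_unique HF Hk Hb), inst_var; simpl.
  exists (lift (S n) A), (Var n); rewrite emb_lift; repeat split.
  - apply beta_conv_refl.
  - apply beta_star_refl.
  - constructor; auto.
  - exists s; auto.
Qed.

End Reducibility.

Section Fundamental.
Context {srt : Type} (Sp : spec srt) (HF : functional Sp).
Notation tm' := (term (option srt)).
Notation SS := (completion Sp).

Definition valid (G : context (option srt)) (M T : tm') : Prop :=
  forall D sg, wf Sp D -> red_env Sp G D sg ->
  forall k, has_skeleton Sp G T k -> red Sp k D (inst sg T) (inst sg M).

Lemma valid_base G M T a D sg : valid G M T -> typ SS G T (Srt (Some a)) ->
  wf Sp D -> red_env Sp G D sg -> base_red Sp D (inst sg T) (inst sg M).
Proof.
  intros IM HT HD HE; apply (IM D sg HD HE SkBase); constructor; exists a; auto.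
Qed.

Lemma valid_sort G T a D sg : valid G T (Srt (Some a)) -> wf Sp D -> red_env Sp G D sg ->
  exists T', beta_star (inst sg T) (emb T') /\ typ Sp D T' (Srt a).
Proof.
  intros IT HD HE; apply (base_red_typed (A := Srt a)).
  - apply (IT D sg HD HE SkBase); constructor; exists a; auto.
  - exists a; auto.
Qed.

Lemma valid_srt G s1 s2 : ax SS s1 s2 -> valid G (Srt s1) (Srt s2).
Proof.
  intros Hax D sg HD HE k Hk.
  destruct (has_skeleton_srt_inv Hk) as [-> [t2 ->]].
  destruct s1 as [t1|]; [|contradiction].
  exists (Srt t2), (Srt t1); repeat split; auto using beta_conv_refl, beta_star_refl.
  - constructor; auto.
  - exists t2; auto.
Qed.

Lemma valid_var G n A : nth_error G n = Some A -> valid G (Var n) (lift (S n) A).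
Proof. intros E D sg HD HE k Hk; apply HE; auto. Qed.

Lemma valid_pi G A B s1 s2 s3 : typ SS G A (Srt s1) -> rl SS s1 s2 s3 ->
  valid G A (Srt s1) -> valid (A :: G) B (Srt s2) -> valid G (Pi A B) (Srt s3).
Proof.
  intros HA Hr IA IB D sg HD HE k Hk.
  destruct (has_skeleton_srt_inv Hk) as [-> [t3 ->]].
  destruct Hr as [a [b [-> [-> Hr]]]].
  destruct (valid_sort IA HD HE) as [A' [HAr HA']].
  assert (HE' := red_env_up HF (typ_wf HA) HE HA (beta_star_conv HAr) HA').
  destruct (valid_sort IB (wf_cons HA') HE') as [B' [HBr HB']].
  exists (Srt t3), (Pi A' B'); simpl; repeat split; auto using beta_conv_refl, beta_star_pi.
  - econstructor; eauto.
  - exists t3; auto.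
Qed.

Lemma valid_lam_base G A M B s : typ SS G (Pi A B) (Srt (Some s)) ->
  valid (A :: G) M B -> valid G (Pi A B) (Srt (Some s)) -> valid G (Lam A M) (Pi A B).
Proof.
  intros HP IM IP D sg HD HE k Hk.
  destruct (typ_pi_inv HP) as [x1 [x2 [x3 [HA [HB [Hr Hc]]]]]].
  apply beta_conv_srt_inv in Hc; subst x3.
  destruct Hr as [a [b [-> [-> _]]]].
  assert (Hb : has_skeleton Sp G (Pi A B) SkBase) by (constructor; eauto).
  rewrite (has_skeleton_unique HF Hk Hb).
  destruct (valid_sort IP HD HE) as [P' [HPr HP']]; simpl in HPr.
  destruct (beta_star_pi_inv HPr) as [A1 [B1 [EP [HAr HBr]]]].
  destruct P' as [| | | | A' B']; inversion EP; subst.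
  destruct (typ_pi_inv HP') as [t1 [t2 [t3 [HA' [HB' _]]]]].
  assert (HE' := red_env_up HF (typ_wf HA) HE HA (beta_star_conv HAr) HA').
  destruct (valid_base IM HB (wf_cons HA') HE') as [T'' [M' [Hc1 [Hb1 [Ht1 _]]]]].
  exists (Pi A' B'), (Lam A' M'); repeat split.
  - apply beta_star_conv, beta_star_pi; auto.
  - apply beta_star_lam; auto.
  - apply typ_lam with s; auto; apply typ_conv with T'' t2; auto.
    apply beta_conv_emb_inv; eapply beta_conv_trans;
      [apply beta_conv_sym; eauto | apply beta_star_conv; auto].
  - exists s; auto.
Qed.

(* A tau-level abstraction is reducible because applying it to a reducible
   argument beta-reduces to its body under the extended substitution. *)
Lemma valid_lam_arrow G A M B : typ SS G (Pi A B) (Srt None) ->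
  valid (A :: G) M B -> valid G (Lam A M) (Pi A B).
Proof.
  intros HP IM D sg HD HE k Hk.
  destruct (typ_pi_inv HP) as [s1 [_ [_ [HA _]]]].
  inversion Hk as [? ? HPb | ? ? ? a b _ Ha Hb]; subst.
  { destruct (typ_tau_base_is_sort HF HP HPb) as [? E]; discriminate. }
  exists (inst sg A), (inst (up sg) B); split; [apply beta_conv_refl|].
  intros G0 N HW HN.
  apply red_beta_star_expand with (inst (scons N (fun i => lift (length G0) (sg i))) M).
  - rewrite <- subst_inst_up, <- lift_rec1_inst_up; apply beta_star_step, beta_redex.
  - rewrite lift_rec1_inst_up, subst_inst_up.
    apply IM; auto; eapply red_env_scons; eauto using wf_cons.
Qed.

Lemma valid_lam G A M B s : typ SS G (Pi A B) (Srt s) ->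
  valid (A :: G) M B -> valid G (Pi A B) (Srt s) -> valid G (Lam A M) (Pi A B).
Proof.
  destruct s; eauto using valid_lam_base, valid_lam_arrow.
Qed.

Lemma valid_app_base G M N A B s : typ SS G (Pi A B) (Srt (Some s)) -> typ SS G N A ->
  valid G M (Pi A B) -> valid G N A -> valid G (App M N) (subst N B).
Proof.
  intros HP HN IM IN D sg HD HE k Hk.
  destruct (typ_pi_inv HP) as [x1 [x2 [x3 [HA [HB [Hr Hc]]]]]].
  apply beta_conv_srt_inv in Hc; subst x3.
  destruct Hr as [a [b [-> [-> _]]]].
  assert (Hb : has_skeleton Sp G (subst N B) SkBase).
  { constructor; exists b; left; apply (typ_subst (T := Srt (Some b)) HB); auto. }
  rewrite (has_skeleton_unique HF Hk Hb).
  destruct (base_red_pi (valid_base IM HP HD HE))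
    as [A' [B' [M' [HAr [HBr [HMr [HM' [t HP']]]]]]]].
  destruct (valid_base IN HA HD HE) as [A1 [N' [HcA [HNr [HN' _]]]]].
  destruct (typ_pi_inv HP') as [t1 [t2 [t3 [HA' [HB' _]]]]].
  assert (HN'' : typ Sp D N' A').
  { apply typ_conv with A1 t1; auto; apply beta_conv_emb_inv.
    eapply beta_conv_trans; [apply beta_conv_sym; eauto | apply beta_star_conv; auto]. }
  exists (subst N' B'), (App M' N'); repeat split.
  - rewrite inst_subst, emb_subst; apply beta_star_conv, beta_star_subst; auto.
  - apply beta_star_app; auto.
  - econstructor; eauto.
  - exists t2; left; apply (typ_subst (T := Srt t2) HB'); auto.
Qed.

Lemma valid_app_arrow G M N A B : typ SS G (Pi A B) (Srt None) -> typ SS G N A ->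
  valid G M (Pi A B) -> valid G N A -> valid G (App M N) (subst N B).
Proof.
  intros HP HN IM IN D sg HD HE k Hk.
  destruct (typ_pi_inv HP) as [x1 [x2 [x3 [HA [HB _]]]]].
  destruct (has_skeleton_exists HA) as [a Ha], (has_skeleton_exists HB) as [b Hb].
  rewrite (has_skeleton_unique HF Hk (has_skeleton_subst Hb HN)).
  assert (IMab := IM D sg HD HE (SkArrow a b) (has_skeleton_arrow HP Ha Hb)); simpl in IMab.
  destruct IMab as [A0 [B0 [Hc Happ]]]; destruct (beta_conv_pi_inv Hc) as [HcA HcB].
  specialize (Happ [] (inst sg N) HD); simpl in Happ; unfold lift in Happ.
  rewrite !lift_rec0 in Happ.
  rewrite inst_subst; eapply red_conv.
  - apply Happ; eapply red_conv; [apply IN | exact HcA]; auto.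
  - apply beta_conv_subst, beta_conv_sym; auto.
Qed.

Lemma valid_app G M N A B : typ SS G M (Pi A B) -> typ SS G N A ->
  valid G M (Pi A B) -> valid G N A -> valid G (App M N) (subst N B).
Proof.
  intros HM; destruct (type_correctness HM) as [[s E] | [[s|] HP]];
    [discriminate | eapply valid_app_base | eapply valid_app_arrow]; eauto.
Qed.

Lemma valid_conv G M A B s : typ SS G M A -> typ SS G B (Srt s) -> beta_conv A B ->
  valid G M A -> valid G M B.
Proof.
  intros HM HB Hc IM D sg HD HE k Hk.
  eapply red_conv; [apply IM; auto | apply beta_conv_inst; auto].
  apply has_skeleton_conv with B; auto.
  destruct (type_correctness HM) as [[[y|] ->] | [y Hy]]; eauto.
  destruct (church_rosser Hc) as [C [HC1 HC2]]; apply beta_star_srt_inv in HC1; subst.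
  exfalso; eapply tau_untyped, subject_reduction; eauto.
Qed.

Lemma fundamental G M T : typ SS G M T -> valid G M T.
Proof.
  induction 1; eauto using valid_srt, valid_var, valid_pi, valid_lam, valid_app, valid_conv.
Qed.

End Fundamental.

Theorem corollary5p23 :
  forall (srt : Type) (S : spec srt), functional S ->
  forall (G : context srt) (A : term srt) (M : term (option srt)),
    wf S G ->
    (exists s : srt, typ S G A (Srt s) \/ A = Srt s) ->
    typ (completion S) (List.map emb G) M (emb A) ->
    exists M' : term srt, beta_star M (emb M') /\ typ S G M' A.
Proof.
  intros srt S HF G A M HG [s HA] HM.
  assert (Hk : has_skeleton S (map emb G) (emb A) SkBase).
  { constructor; exists s; destruct HA as [HA | ->]; [left; apply (typ_emb HA) | auto]. }
  assert (HI := fundamental HF HM HG (red_env_emb HF HG) Hk); rewrite !inst_var in HI.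
  apply (base_red_typed HI); exists s; auto.
Qed.
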